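(* Let $T\in\mathcal{C}_{P,t}$ and let $I_T=\{S\in\mathbb{C}[z]: T(S(z)b)=0\text{ for all }b\in\mathcal{A}_P\}$. Then $I_T=\{S\in\mathbb{C}[z] : S(x)F_T(x)\in\mathbb{C}[x]\}$, where the product $S(x)F_T(x)$ is computed in the ring of formal Laurent series $\mathbb{C}((x^{-1}))$. In particular, $T$ is degenerate if and only if $F_T(x)$ is (the expansion at $x=\infty$ of) a rational function of $x$; and in that case, writing $F_T=R/S$ with $R,S\in\mathbb{C}[x]$, $S$ monic and $\gcd(R,S)=1$, the polynomial $S(z)$ generates the ideal $I_T$ of $\mathbb{C}[z]$.
   Context: $P\in\mathbb{C}[x]$ is a nonconstant monic polynomial, $t\in\mathbb{C}\setminus\{0\}$. $\mathcal{A}_P$ denotes the associative unital $\mathbb{C}$-algebra generated by $u,v,z$ subject to $zu-uz=u$, $zv-vz=-v$, $uv=P(z-\tfrac12)$, $vu=P(z+\tfrac12)$; the subalgebra generated by $z$ is a polynomial ring $\mathbb{C}[z]$. $g_t$ is the automorphism with $g_t(u)=t^{-1}u$, $g_t(v)=tv$, $g_t(z)=z$. A twisted trace is a linear $T:\mathcal{A}_P\to\mathbb{C}$ with $T(ab)=T(g_t(b)a)$ for all $a,b$; $\mathcal{C}_{P,t}$ is the space of these. $T$ is degenerate if there is $0\neq a\in\mathcal{A}_P$ with $T(ab)=0$ for all $b$. The formal Stieltjes transform of $T$ is $F_T(x)=\sum_{n\ge0}T(z^n)x^{-n-1}\in x^{-1}\mathbb{C}[[x^{-1}]]$; rational functions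 vanishing at $\infty$ are identified with their expansions in $x^{-1}\mathbb{C}[[x^{-1}]]$. *)

From HB Require Import structures.
From mathcomp Require Import all_boot all_order all_algebra.
From mathcomp Require Import complex reals.
Set Implicit Arguments. Unset Strict Implicit. Unset Printing Implicit Defensive.
Import Order.TTheory GRing.Theory Num.Theory.
Local Open Scope ring_scope.

Definition AP_rels (C : fieldType) (P : {poly C}) (B : algType C) (u v z : B) : Prop :=
  [/\ z * u - u * z = u,
      z * v - v * z = - v,
      u * v = horner_alg (z - (2%:R^-1 : C)%:A) P
    & v * u = horner_alg (z + (2%:R^-1 : C)%:A) P].

Definition alg_morph (C : fieldType) (A B : algType C) (f : A -> B) : Prop :=
  [/\ forall (c : C) (a b : A), f (c *: a + b) = c *: f a + f b,
      forall a b : A, f (a * b) = f a * f b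
    & f 1 = 1].

(* (A, u, v, z) is the associative unital C-algebra generated by u, v, z
   subject to the relations AP_rels P (universal property of a presentation). *)
Definition is_AP (C : fieldType) (P : {poly C}) (A : algType C) (u v z : A) : Prop :=
  AP_rels P u v z /\
  forall (B : algType C) (u' v' z' : B), AP_rels P u' v' z' ->
    (exists f : A -> B, [/\ alg_morph f, f u = u', f v = v' & f z = z']) /\
    (forall f g : A -> B, alg_morph f -> alg_morph g ->
        f u = g u -> f v = g v -> f z = g z -> f = g).

Definition twisted_trace (C : fieldType) (A : algType C) (g : A -> A) (T : A -> C) : Prop :=
  (forall (c : C) (a b : A), T (c *: a + b) = c * T a + T b) /\
  (forall a b : A, T (a * b) = T (g b * a)).

Definition degenerate (C : fieldType) (A : algType C) (T : A -> C) : Prop :=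
  exists a : A, a != 0 /\ forall b : A, T (a * b) = 0.

Definition in_IT (C : fieldType) (A : algType C) (z : A) (T : A -> C) (S : {poly C}) : Prop :=
  forall b : A, T (horner_alg z S * b) = 0.

(* Formal Laurent series in x^{-1} are represented by their coefficient
   function k |-> (coefficient of x^k), k : int (support bounded above). *)

(* F_T(x) = sum_{n>=0} T(z^n) x^{-n-1}; note Negz n = -(n+1). *)
Definition stieltjes (C : fieldType) (A : algType C) (z : A) (T : A -> C) : int -> C :=
  fun k => match k with Negz n => T (z ^+ n) | Posz _ => 0 end.

Definition lmul_poly (C : fieldType) (S : {poly C}) (f : int -> C) : int -> C :=
  fun k => \sum_(i < size S) S`_i * f (k - (i : nat)%:Z).

Definition laurent_of_poly (C : fieldType) (p : {poly C}) : int -> C :=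
  fun k => match k with Posz n => p`_n | Negz _ => 0 end.

Definition laurent_is_poly (C : fieldType) (f : int -> C) : Prop :=
  forall n : nat, f (Negz n) = 0.

Definition is_rational_expansion (C : fieldType) (f : int -> C) : Prop :=
  exists Rp S : {poly C}, S != 0 /\ lmul_poly S f = laurent_of_poly Rp.

From HB Require Import structures.
From mathcomp Require Import all_boot all_order all_algebra.
From mathcomp Require Import complex reals.
From mathcomp Require Import zify ring boolp.
Import Order.TTheory GRing.Theory Num.Theory.
Set Implicit Arguments. Unset Strict Implicit. Unset Printing Implicit Defensive.
Local Open Scope ring_scope.

(* Every element of [A_P] is a sum of PBW monomials [u^k p(z)] and [v^k p(z)], which are
   eigenvectors of [ad z] of weights [k] and [-k].  As [T (a z) = T (z a)], [T] vanishes on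
   nonzero weights, so [S(z)] is in the radical of the trace form iff [T (S(z) z^n) = 0] for
   all [n], i.e. iff [S F_T] has no negative powers of [x].  The radical is stable under
   taking weight components, and a nonzero component [u^m g(z)] gives the nonzero element
   [u^m g(z) v^m = (u^m v^m) g(z - m)] of [C[z]] in the radical (symmetrically for [v]); so
   a degenerate [T] has a rational [F_T].  Conversely [S(z) != 0] for [S != 0], as seen on
   the faithful representation of [A_P] on [C[x]].  Finally, if [S F_T = R] with
   [gcd(R, S) = 1] and [Q] is in [I_T], then [(Q mod S) F_T = R'] is a polynomial as well,
   so [(Q mod S) R = S R'] and [S] divides [Q mod S], hence [Q]. *)

Section LaurentSeries.
Variable C : fieldType.
Implicit Types (p q r S : {poly C}) (f : int -> C).

Lemma lmul_poly_widen p f k N : (size p <= N)%N ->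
  lmul_poly p f k = \sum_(i < N) p`_i * f (k - (i : nat)%:Z).
Proof.
move=> leN; rewrite /lmul_poly (big_ord_widen _ (fun i => p`_i * f (k - i%:Z)) leN).
rewrite big_mkcond; apply: eq_bigr => i _; case: ifP => // /negbT.
by rewrite -leqNgt => /(nth_default 0) ->; rewrite mul0r.
Qed.

Lemma lmul_poly0 f k : lmul_poly 0 f k = 0.
Proof. by rewrite /lmul_poly size_poly0 big_ord0. Qed.

Lemma lmul_polyD p q f k :
  lmul_poly (p + q) f k = lmul_poly p f k + lmul_poly q f k.
Proof.
have leP : (size p <= size p + size q)%N by apply: leq_addr.
have leQ : (size q <= size p + size q)%N by apply: leq_addl.
have lepq : (size (p + q)%R <= size p + size q)%N.
  by apply: leq_trans (size_polyD _ _) _; rewrite geq_max leP leQ.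
rewrite !(lmul_poly_widen _ _ leP, lmul_poly_widen _ _ leQ, lmul_poly_widen _ _ lepq).
by rewrite -big_split; apply: eq_bigr => i _; rewrite coefD mulrDl.
Qed.

Lemma lmul_polyZ c p f k : lmul_poly (c *: p) f k = c * lmul_poly p f k.
Proof.
rewrite (lmul_poly_widen _ _ (size_scale_leq c p)) /lmul_poly mulr_sumr.
by apply: eq_bigr => i _; rewrite coefZ mulrA.
Qed.

Lemma lmul_polyC c f k : lmul_poly c%:P f k = c * f k.
Proof. by rewrite (lmul_poly_widen _ _ (size_polyC_leq1 c)) big_ord1 coefC subr0. Qed.

Lemma lmul_polyMX p f k : lmul_poly (p * 'X) f k = lmul_poly p f (k - 1).
Proof.
have le : (size (p * 'X)%R <= (size p).+1)%N.
  by apply: leq_trans (size_polyMleq _ _) _; rewrite size_polyX addn2.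
rewrite (lmul_poly_widen _ _ le) big_ord_recl coefMX mul0r add0r.
by apply: eq_bigr => i _; rewrite coefMX /=; congr (_ * f _); rewrite /bump /=; lia.
Qed.

Lemma lmul_polyM p q f k :
  lmul_poly (p * q) f k = lmul_poly p (lmul_poly q f) k.
Proof.
elim/poly_ind: p q k => [|p c IH] q k; first by rewrite mul0r !lmul_poly0.
have shift g : lmul_poly p (fun j => g (j - 1)) k = lmul_poly p g (k - 1).
  by apply: eq_bigr => i _; congr (_ * g _); lia.
rewrite mulrDl -mulrA (mulrC 'X) mul_polyC lmul_polyD lmul_polyZ IH.
rewrite lmul_polyD lmul_polyC lmul_polyMX -shift; congr (_ + _).
by congr (lmul_poly p _ k); apply: funext => j; rewrite lmul_polyMX.
Qed.

Lemma lmul_poly_laurent p q :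
  lmul_poly p (laurent_of_poly q) = laurent_of_poly (p * q).
Proof.
apply: funext => k; elim/poly_ind: p k => [|p c IH] k.
  by rewrite lmul_poly0 mul0r; case: k => n //=; rewrite coef0.
rewrite lmul_polyD lmul_polyMX IH lmul_polyC mulrDl mul_polyC.
rewrite -mulrA (mulrC 'X) mulrA.
case: k => [[|n]|n] /=; rewrite ?coefD ?coefMX ?coefZ ?mulr0 ?addr0 //.
by rewrite subn1.
Qed.

Lemma laurent_of_poly_inj : injective (@laurent_of_poly C).
Proof. by move=> p q e; apply/polyP => i; have := congr1 (fun g => g (Posz i)) e. Qed.

Lemma lmul_poly_polyE S f : (forall n : nat, f n = 0) ->
  laurent_is_poly (lmul_poly S f) ->
  lmul_poly S f = laurent_of_poly (\poly_(i < size S) lmul_poly S f i).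
Proof.
move=> f_neg S_f; apply: funext => -[n|n] /=; last exact: S_f.
rewrite coef_poly; case: ltnP => // leSn; rewrite /lmul_poly big1 // => i _.
have lein : (i <= n)%N by apply: ltnW; apply: leq_trans (ltn_ord i) leSn.
by rewrite subzn // f_neg mulr0.
Qed.

Lemma lmul_poly_cross S r f R1 R2 :
  lmul_poly S f = laurent_of_poly R1 -> lmul_poly r f = laurent_of_poly R2 ->
  r * R1 = S * R2.
Proof.
move=> Sf rf; apply: laurent_of_poly_inj; rewrite -!lmul_poly_laurent -Sf -rf.
by apply: funext => k; rewrite -!lmul_polyM mulrC.
Qed.

End LaurentSeries.

Section HornerAlg.
Variables (R : comNzRingType) (B : algType R).

Lemma horner_alg_coef (a : B) p :
  horner_alg a p = \sum_(i < size p) p`_i *: a ^+ i.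
Proof.
rewrite -{1}[p]coefK poly_def linear_sum; apply: eq_bigr => i _.
by rewrite linearZ rmorphXn /= horner_algX mulr_algl.
Qed.

Lemma horner_alg_comp (a : B) p q :
  horner_alg a (p \Po q) = horner_alg (horner_alg a q) p.
Proof.
rewrite comp_polyE [RHS]horner_alg_coef linear_sum; apply: eq_bigr => i _.
by rewrite linearZ rmorphXn /= mulr_algl.
Qed.

End HornerAlg.

Definition shift_poly (R : nzRingType) (c : R) (p : {poly R}) := p \Po ('X + c%:P).

Lemma shift_poly_eq0 (R : idomainType) (c : R) p : (shift_poly c p == 0) = (p == 0).
Proof. by rewrite -!size_poly_eq0 /shift_poly size_comp_poly2 // size_XaddC. Qed.

Lemma big_mem_uniq (R : Type) (idx : R) (op : Monoid.com_law idx) (I : eqType)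
    (s1 s : seq I) (G : I -> R) :
  uniq s1 -> uniq s -> {subset s1 <= s} ->
  \big[op/idx]_(i <- s | i \in s1) G i = \big[op/idx]_(i <- s1) G i.
Proof.
move=> s1_uniq s_uniq s1_s; rewrite -big_filter; apply: perm_big.
apply: uniq_perm => [|//|i]; first exact: filter_uniq.
by rewrite mem_filter andb_idr //; apply: s1_s.
Qed.

Section AlgMorphism.
Variables (C : fieldType) (A B : algType C) (f : A -> B).
Hypothesis f_morph : alg_morph f.

Lemma alg_morphD a b : f (a + b) = f a + f b.
Proof. by case: f_morph => lin _ _; have := lin 1 a b; rewrite !scale1r. Qed.

Lemma alg_morph0 : f 0 = 0.
Proof. by apply: (@addrI _ (f 0)); rewrite -alg_morphD !addr0. Qed.

Lemma alg_morphZ c a : f (c *: a) = c *: f a.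
Proof. by case: f_morph => lin _ _; have := lin c a 0; rewrite !addr0 alg_morph0 addr0. Qed.

Lemma alg_morph_horner a p : f (horner_alg a p) = horner_alg (f a) p.
Proof.
case: f_morph => _ fM f1; elim/poly_ind: p => [|p c IH]; first by rewrite !rmorph0 alg_morph0.
rewrite !rmorphD !rmorphM /= !horner_algX !horner_algC alg_morphD fM IH.
by rewrite alg_morphZ f1.
Qed.

End AlgMorphism.

Lemma alg_morph_comp (C : fieldType) (A B D : algType C) (f : A -> B) (g : B -> D) :
  alg_morph f -> alg_morph g -> alg_morph (g \o f).
Proof.
move=> f_morph g_morph; have [_ fM f1] := f_morph; have [_ gM g1] := g_morph.
split=> [c a b|a b|] /=; last by rewrite f1 g1.
  by rewrite (alg_morphD f_morph) (alg_morphZ f_morph) (alg_morphD g_morph) (alg_morphZ g_morph).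
by rewrite fM gM.
Qed.

Section Presentation.
Variables (C : fieldType) (A : algType C) (L : A -> Prop).
Hypotheses (L1 : L 1) (L0 : L 0) (LD : forall a b, L a -> L b -> L (a + b))
  (LZ : forall c a, L a -> L (c *: a)) (LM : forall a b, L a -> L b -> L (a * b)).

Definition subalg_pred : {pred A} := fun a => `[< L a >].

Lemma subalg_pred_closed : GRing.subsemialg_closed subalg_pred.
Proof.
split; [exact/asboolP | split; first exact/asboolP | |].
- by move=> a b /asboolP La /asboolP Lb; apply/asboolP; apply: LD.
- by move=> c a /asboolP La; apply/asboolP; apply: LZ.
- by move=> a b /asboolP La /asboolP Lb; apply/asboolP; apply: LM.
Qed.

HB.instance Definition _ := GRing.isSubalgClosed.Build C A subalg_pred subalg_pred_closed.

Inductive subalg := Subalg a of a \in subalg_pred.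
Definition subalg_val (x : subalg) := let: Subalg a _ := x in a.
HB.instance Definition _ := [isSub for subalg_val].
HB.instance Definition _ := [Choice of subalg by <:].
HB.instance Definition _ := [SubChoice_isSubAlgebra of subalg by <:].

(* Via the universal property, [id] factors through the subalgebra of elements satisfying [L]. *)
Lemma is_AP_ind (P : {poly C}) (u v z : A) : is_AP P u v z ->
  L u -> L v -> L z -> forall a, L a.
Proof.
move=> [[r1 r2 r3 r4] univ] Lu Lv Lz a.
have inL x : L x -> x \in subalg_pred by move=> Lx; apply/asboolP.
have val_morph : alg_morph subalg_val by [].
pose u' := Subalg (inL _ Lu); pose v' := Subalg (inL _ Lv); pose z' := Subalg (inL _ Lz).
have rels' : AP_rels P u' v' z'.
  by split; apply: val_inj; rewrite /= ?(alg_morph_horner val_morph) /= ?r1 ?r2 ?r3 ?r4.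
have [[f [f_morph fu fv fz]] _] := univ _ _ _ _ rels'.
have [_ univ_uniq] := univ _ _ _ _ (And4 r1 r2 r3 r4).
have val_f_id : subalg_val \o f = id.
  by apply: univ_uniq; rewrite /= ?fu ?fv ?fz //; apply: alg_morph_comp.
by rewrite -[a]/(id a) -val_f_id /=; case: (f a) => b /= /asboolP.
Qed.

End Presentation.

Section PolyEndomorphisms.
Variable C : fieldType.
Local Notation V := {poly C}.
Implicit Types f g : V -> V.

Lemma linear_fun0 : linear (fun _ : V => 0 : V).
Proof. by move=> c x y; rewrite scaler0 addr0. Qed.
Lemma linear_funD f g : linear f -> linear g -> linear (fun x => f x + g x).
Proof. by move=> f_lin g_lin c x y; rewrite f_lin g_lin scalerDr addrACA. Qed.
Lemma linear_funN f : linear f -> linear (fun x => - f x).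
Proof. by move=> f_lin c x y; rewrite f_lin opprD scalerN. Qed.
Lemma linear_funZ a f : linear f -> linear (fun x => a *: f x).
Proof. by move=> f_lin c x y; rewrite f_lin scalerDr !scalerA mulrC. Qed.
Lemma linear_comp f g : linear f -> linear g -> linear (f \o g).
Proof. by move=> f_lin g_lin c x y /=; rewrite g_lin f_lin. Qed.

Definition linearb : {pred V -> V} := fun f => `[< linear f >].

Inductive endo := Endo f of f \in linearb.
Definition endo_fun (e : endo) := let: Endo f _ := e in f.
Coercion endo_fun : endo >-> Funclass.
HB.instance Definition _ := [isSub for endo_fun].
HB.instance Definition _ := [Choice of endo by <:].

Lemma endoP (e : endo) : linear e.
Proof. by case: e => f /= /asboolP. Qed.

Lemma endo0 (e : endo) : e 0 = 0.
Proof.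
have := endoP e 1 0 0; rewrite scaler0 addr0 scale1r => e00.
by apply: (@addrI _ (e 0)); rewrite addr0 -e00.
Qed.

Lemma endoZ (e : endo) c x : e (c *: x) = c *: e x.
Proof. by rewrite -[c *: x]addr0 endoP endo0 addr0. Qed.

Lemma endoD (e : endo) x y : e (x + y) = e x + e y.
Proof. by have := endoP e 1 x y; rewrite !scale1r. Qed.

Lemma endo_ext (e1 e2 : endo) : e1 =1 e2 -> e1 = e2.
Proof. by move=> e; apply: val_inj; apply: funext. Qed.

Definition endo_of f (f_lin : linear f) := Endo (introT (asboolP _) f_lin).

Definition endo_zero := endo_of linear_fun0.
Definition endo_add (e1 e2 : endo) := endo_of (linear_funD (endoP e1) (endoP e2)).
Definition endo_opp (e : endo) := endo_of (linear_funN (endoP e)).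
Definition endo_one := @endo_of id (fun _ _ _ => erefl).
Definition endo_mul (e1 e2 : endo) := endo_of (linear_comp (endoP e1) (endoP e2)).
Definition endo_scale a (e : endo) := endo_of (linear_funZ a (endoP e)).

Lemma endo_addA : associative endo_add.
Proof. by move=> ? ? ?; apply: endo_ext => x /=; rewrite addrA. Qed.
Lemma endo_addC : commutative endo_add.
Proof. by move=> ? ?; apply: endo_ext => x /=; rewrite addrC. Qed.
Lemma endo_add0 : left_id endo_zero endo_add.
Proof. by move=> ?; apply: endo_ext => x /=; rewrite add0r. Qed.
Lemma endo_addN : left_inverse endo_zero endo_opp endo_add.
Proof. by move=> ?; apply: endo_ext => x /=; rewrite addNr. Qed.
HB.instance Definition _ := GRing.isZmodule.Build endo endo_addA endo_addC endo_add0 endo_addN.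

Lemma endo_mulA : associative endo_mul. Proof. by move=> ? ? ?; apply: endo_ext. Qed.
Lemma endo_mul1 : left_id endo_one endo_mul. Proof. by move=> ?; apply: endo_ext. Qed.
Lemma endo_mulr1 : right_id endo_one endo_mul. Proof. by move=> ?; apply: endo_ext. Qed.
Lemma endo_mulDl : left_distributive endo_mul +%R. Proof. by move=> ? ? ?; apply: endo_ext. Qed.
Lemma endo_mulDr : right_distributive endo_mul +%R.
Proof. by move=> e1 e2 e3; apply: endo_ext => x /=; rewrite endoD. Qed.
Lemma endo_one_neq0 : endo_one != 0.
Proof. by apply/eqP => /(congr1 (fun e : endo => e 1)) /= /eqP; rewrite oner_eq0. Qed.
HB.instance Definition _ := GRing.Zmodule_isNzRing.Build endo
  endo_mulA endo_mul1 endo_mulr1 endo_mulDl endo_mulDr endo_one_neq0.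

Lemma endo_scaleA a b e : endo_scale a (endo_scale b e) = endo_scale (a * b) e.
Proof. by apply: endo_ext => x /=; rewrite scalerA. Qed.
Lemma endo_scale1 : left_id 1 endo_scale.
Proof. by move=> ?; apply: endo_ext => x /=; rewrite scale1r. Qed.
Lemma endo_scaleDr : right_distributive endo_scale +%R.
Proof. by move=> ? ? ?; apply: endo_ext => x /=; rewrite scalerDr. Qed.
Lemma endo_scaleDl e : {morph endo_scale^~ e : a b / a + b}.
Proof. by move=> ? ?; apply: endo_ext => x /=; rewrite scalerDl. Qed.
HB.instance Definition _ := GRing.Zmodule_isLmodule.Build C endo
  endo_scaleA endo_scale1 endo_scaleDr endo_scaleDl.

Lemma endo_scaleAl a (e1 e2 : endo) : a *: (e1 * e2) = (a *: e1) * e2.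
Proof. by apply: endo_ext. Qed.
HB.instance Definition _ := GRing.Lmodule_isLalgebra.Build C endo endo_scaleAl.
Lemma endo_scaleAr a (e1 e2 : endo) : a *: (e1 * e2) = e1 * (a *: e2).
Proof. by apply: endo_ext => x /=; rewrite endoZ. Qed.
HB.instance Definition _ := GRing.Lalgebra_isAlgebra.Build C endo endo_scaleAr.

Lemma linear_mul q : linear (fun p : V => q * p).
Proof. by move=> c x y; rewrite mulrDr scalerAr. Qed.
Lemma linear_comp_poly r : linear (fun p : V => p \Po r).
Proof. by move=> c x y; rewrite comp_polyD comp_polyZ. Qed.

Definition mul_endo q := endo_of (linear_mul q).
Definition comp_endo r := endo_of (linear_comp_poly r).

Lemma horner_mul_endo q p : horner_alg (mul_endo q) p = mul_endo (p \Po q).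
Proof.
elim/poly_ind: p => [|p c IH].
  by rewrite rmorph0 comp_poly0; apply: endo_ext => x /=; rewrite mul0r.
rewrite rmorphD rmorphM /= horner_algX horner_algC IH; apply: endo_ext => x /=.
by rewrite comp_polyD comp_polyM comp_polyX comp_polyC mulrDl mul_polyC -mulrA.
Qed.

Lemma mul_endo_addC q (c : C) : mul_endo q + c%:A = mul_endo (q + c%:P).
Proof. by apply: endo_ext => x /=; rewrite mulrDl mul_polyC. Qed.

End PolyEndomorphisms.

Section Model.
Variables (C : numFieldType) (P : {poly C}).

Let half := (2%:R^-1 : C).

(* [A_P] acts on [C[x]] with [z] as multiplication by [x], [u] as the shift
   [p(x) |-> p(x - 1)] and [v] as [p(x) |-> P(x + 1/2) p(x + 1)]. *)
Lemma poly_endo_AP_rels : AP_rels P (comp_endo ('X + (-1)%:P))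
  (mul_endo (P \Po ('X + half%:P)) * comp_endo ('X + 1%:P)) (mul_endo 'X).
Proof.
have comp_shift c d (p : {poly C}) :
    p \Po ('X + c%:P) \Po ('X + d%:P) = p \Po ('X + (c + d)%:P).
  by rewrite -comp_polyA comp_polyD comp_polyX comp_polyC polyCD; congr (_ \Po _); ring.
have half_sub1 : half + -1 = - half.
  by rewrite /half; field.
split; try apply: endo_ext => p /=.
- by rewrite (comp_polyM 'X p) comp_polyX; ring.
- by rewrite comp_polyM comp_polyX; ring.
- rewrite -scaleNr mul_endo_addC horner_mul_endo /= comp_polyM !comp_shift.
  by rewrite half_sub1 addrN addr0 comp_polyXr.
- rewrite mul_endo_addC horner_mul_endo /= comp_shift.
  by rewrite addNr addr0 comp_polyXr.
Qed.

Lemma is_AP_horner_inj (A : algType C) (u v z : A) :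
  is_AP P u v z -> injective (horner_alg z).
Proof.
move=> [_ univ] S1 S2 eS; apply/eqP; rewrite -subr_eq0; apply/eqP.
have [[f [f_morph _ _ fz]] _] := univ _ _ _ _ poly_endo_AP_rels.
have /(congr1 (fun e : endo C => e 1)) := alg_morph_horner f_morph z (S1 - S2).
by rewrite rmorphB /= eS subrr alg_morph0 // fz horner_mul_endo /= comp_polyXr mulr1.
Qed.

End Model.

Section TwistedTrace.
Variables (C : numFieldType) (P : {poly C}) (A : algType C) (u v z : A) (T : A -> C).
Hypothesis AP : is_AP P u v z.
Hypothesis T_linear : forall c a b, T (c *: a + b) = c * T a + T b.
Hypothesis T_mulz : forall a, T (a * z) = T (z * a).

Local Notation ev := (horner_alg z).
Local Notation F := (stieltjes z T).

Lemma T0 : T 0 = 0.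
Proof.
have := T_linear 1 0 0; rewrite scaler0 addr0 mul1r => T00.
by apply: (@addrI _ (T 0)); rewrite -T00 addr0.
Qed.

Lemma TD a b : T (a + b) = T a + T b.
Proof. by have := T_linear 1 a b; rewrite scale1r mul1r. Qed.

Lemma TZ c a : T (c *: a) = c * T a.
Proof. by have := T_linear c a 0; rewrite !addr0 T0 addr0. Qed.

Lemma TN a : T (- a) = - T a.
Proof. by rewrite -scaleN1r TZ mulN1r. Qed.

Lemma T_sum I (r : seq I) (Q : pred I) (G : I -> A) :
  T (\sum_(i <- r | Q i) G i) = \sum_(i <- r | Q i) T (G i).
Proof. exact: (big_morph T TD T0). Qed.

Definition weight (x : A) (w : C) := z * x - x * z = w *: x.

Lemma T_weight x w : weight x w -> w != 0 -> T x = 0.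
Proof.
move=> x_w w_neq0; have : T (z * x - x * z) = 0 by rewrite TD TN T_mulz subrr.
by rewrite x_w TZ => /eqP; rewrite mulf_eq0 (negbTE w_neq0) => /eqP.
Qed.

Lemma weightM x y a b : weight x a -> weight y b -> weight (x * y) (a + b).
Proof.
move=> x_a y_b; rewrite /weight scalerDl scalerAl scalerAr -x_a -y_b.
by rewrite mulrBl mulrBr !mulrA addrA subrK.
Qed.

Lemma weight_ev p : weight (ev p) 0.
Proof.
rewrite /weight scale0r; apply/eqP; rewrite subr_eq0; apply/eqP.
by have := rmorphM ev 'X p; rewrite mulrC rmorphM /= horner_algX => ->.
Qed.

Lemma weight_expr x w k : weight x w -> weight (x ^+ k) (k%:R * w).
Proof.
move=> x_w; elim: k => [|k IH]; first by rewrite /weight mul0r scale0r expr0 mulr1 mul1r subrr.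
by rewrite exprSr -natr1 mulrDl mul1r; apply: weightM.
Qed.

Lemma ev_mul_weight x w p : weight x w -> ev p * x = x * ev (shift_poly w p).
Proof.
move=> x_w; have zx : z * x = x * (z + w%:A).
  by rewrite mulrDr mulr_algr -x_w addrC subrK.
elim/poly_ind: p => [|p c IH]; first by rewrite /shift_poly comp_poly0 !rmorph0 mul0r mulr0.
rewrite /shift_poly comp_polyD comp_polyM comp_polyX comp_polyC -/(shift_poly w p).
rewrite !rmorphD !rmorphM /= !horner_algX !horner_algC rmorphD /= horner_algX horner_algC.
by rewrite mulrDl -mulrA zx mulrA IH [RHS]mulrDr mulrA mulr_algl mulr_algr.
Qed.

Let half := (2%:R^-1 : C).

Lemma uv_ev : u * v = ev (shift_poly (- half) P).
Proof.
have [_ _ -> _] := proj1 AP.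
by rewrite horner_alg_comp rmorphD /= horner_algX horner_algC scaleNr.
Qed.

Lemma vu_ev : v * u = ev (shift_poly half P).
Proof.
have [_ _ _ ->] := proj1 AP.
by rewrite horner_alg_comp rmorphD /= horner_algX horner_algC.
Qed.

Lemma weight_u : weight u 1.
Proof. by rewrite /weight scale1r; case: (proj1 AP). Qed.

Lemma weight_v : weight v (-1).
Proof. by rewrite /weight scaleN1r; case: (proj1 AP). Qed.

(* [uv_pow m] is [u^m], reading [u^(-k)] as [v^k]; the elements [uv_pow m * p(z)]
   span [A_P] (PBW basis). *)
Definition uv_pow (m : int) := match m with Posz k => u ^+ k | Negz k => v ^+ k.+1 end.
Definition pbw (m : int) p := uv_pow m * ev p.

Lemma weight_uv_pow m : weight (uv_pow m) m%:~R.
Proof.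
case: m => k /=; first by rewrite -[k%:~R]mulr1; apply: weight_expr weight_u.
by rewrite NegzE mulrNz -mulrN1; apply: weight_expr weight_v.
Qed.

Lemma weight_pbw m p : weight (pbw m p) m%:~R.
Proof. by rewrite -[m%:~R]addr0; apply: weightM (weight_uv_pow m) (weight_ev p). Qed.

Lemma T_weight_int x (m : int) : weight x m%:~R -> m != 0 -> T x = 0.
Proof. by move=> x_m m_neq0; apply: T_weight x_m _; rewrite intr_eq0. Qed.

Lemma ev_mul_pbw q m p : ev q * pbw m p = pbw m (shift_poly m%:~R q * p).
Proof. by rewrite /pbw mulrA (ev_mul_weight _ (weight_uv_pow m)) -mulrA -rmorphM. Qed.

Lemma mulu_pbw m p : exists q, u * pbw m p = pbw (m + 1) q.
Proof.
case: m => k; first by exists p; rewrite /pbw mulrA -exprS (_ : Posz k + 1 = k.+1) //; lia.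
exists (shift_poly (- k%:R) (shift_poly (- half) P) * p).
rewrite /pbw /= exprS !mulrA uv_ev (ev_mul_weight _ (weight_expr k weight_v)).
rewrite mulrN1 -mulrA -rmorphM; case: k => [|k] //.
by rewrite (_ : Negz k.+1 + 1 = Negz k) // !NegzE; lia.
Qed.

Lemma mulv_pbw m p : exists q, v * pbw m p = pbw (m - 1) q.
Proof.
case: m => k; last first.
  by exists p; rewrite /pbw mulrA -exprS (_ : Negz k - 1 = Negz k.+1) // !NegzE; lia.
case: k => [|k]; first by exists p; rewrite /pbw mulrA mulr1.
exists (shift_poly k%:R (shift_poly half P) * p).
rewrite /pbw /= exprS !mulrA vu_ev (ev_mul_weight _ (weight_expr k weight_u)).
by rewrite mulr1 -mulrA -rmorphM subn1.
Qed.

Inductive pbw_span : A -> Prop :=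
  | pbw_span0 : pbw_span 0
  | pbw_span_pbw m p : pbw_span (pbw m p)
  | pbw_spanD a b : pbw_span a -> pbw_span b -> pbw_span (a + b).

Lemma pbw_span_mull x a :
  (forall m p, exists m' q, x * pbw m p = pbw m' q) -> pbw_span a -> pbw_span (x * a).
Proof.
move=> x_pbw; elim=> [|m p|a1 a2 _ IH1 _ IH2]; first by rewrite mulr0; apply: pbw_span0.
  by have [m' [q ->]] := x_pbw m p; apply: pbw_span_pbw.
by rewrite mulrDr; apply: pbw_spanD.
Qed.

Lemma pbw_spanZ c a : pbw_span a -> pbw_span (c *: a).
Proof.
elim=> [|m p|a1 a2 _ IH1 _ IH2]; first by rewrite scaler0; apply: pbw_span0.
  have -> : c *: pbw m p = pbw m (c *: p) by rewrite /pbw linearZ /= mulr_algl scalerAr.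
  exact: pbw_span_pbw.
by rewrite scalerDr; apply: pbw_spanD.
Qed.

Lemma pbw_spanT a : pbw_span a.
Proof.
suff span_mul : forall b, pbw_span b -> pbw_span (a * b).
  rewrite -[a]mulr1; apply: span_mul.
  have -> : 1 = pbw 0 1 by rewrite /pbw rmorph1 mulr1.
  exact: pbw_span_pbw.
move: a; apply: (is_AP_ind _ _ _ _ _ AP) => [b|b|a1 a2 IH1 IH2 b|c a IH b|a1 a2 IH1 IH2 b|b|b|b] b_span.
- by rewrite mul1r.
- by rewrite mul0r; apply: pbw_span0.
- by rewrite mulrDl; apply: pbw_spanD; [apply: IH1 | apply: IH2].
- by rewrite -scalerAl; apply: pbw_spanZ; apply: IH.
- by rewrite -mulrA; apply: IH1; apply: IH2.
- by apply: pbw_span_mull b_span => m p; have [q ->] := mulu_pbw m p; exists (m + 1), q.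
- by apply: pbw_span_mull b_span => m p; have [q ->] := mulv_pbw m p; exists (m - 1), q.
- apply: pbw_span_mull b_span => m p; exists m, (shift_poly m%:~R 'X * p).
  by rewrite -ev_mul_pbw horner_algX.
Qed.

Lemma pbwD m p q : pbw m (p + q) = pbw m p + pbw m q.
Proof. by rewrite /pbw rmorphD mulrDr. Qed.

Lemma pbw0 m : pbw m 0 = 0.
Proof. by rewrite /pbw rmorph0 mulr0. Qed.

Lemma pbw_decomposition a :
  exists s (f : int -> {poly C}), uniq s /\ a = \sum_(m <- s) pbw m (f m).
Proof.
elim: (pbw_spanT a) => [|m p|a1 a2 _ [s1 [f1 [s1_uniq ->]]] _ [s2 [f2 [s2_uniq ->]]]].
- by exists [::], (fun=> 0); rewrite big_nil.
- by exists [:: m], (fun=> p); rewrite big_seq1.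
pose s := undup (s1 ++ s2).
pose restr (s' : seq int) (f' : int -> {poly C}) (m : int) := if m \in s' then f' m else 0.
have restrE s' f' : uniq s' -> {subset s' <= s} ->
    \sum_(m <- s) pbw m (restr s' f' m) = \sum_(m <- s') pbw m (f' m).
  move=> s'_uniq s'_s; rewrite -(big_mem_uniq _ _ s'_uniq (undup_uniq _) s'_s) [RHS]big_mkcond.
  by apply: eq_bigr => m _; rewrite /restr; case: ifP; rewrite ?pbw0.
exists s, (fun m => restr s1 f1 m + restr s2 f2 m); split; first exact: undup_uniq.
rewrite (eq_bigr _ (fun m _ => pbwD _ _ _)) big_split /= !restrE // => m m_s;
  by rewrite mem_undup mem_cat m_s ?orbT.
Qed.

Lemma T_pbw_mul m m' p q : m + m' != 0 -> T (pbw m p * pbw m' q) = 0.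
Proof.
by move=> mm'_neq0; apply: T_weight_int mm'_neq0; rewrite intrD; apply: weightM; apply: weight_pbw.
Qed.

Lemma T_mul_pbw_component s f m : uniq s -> m \in s ->
  (forall b, T ((\sum_(j <- s) pbw j (f j)) * b) = 0) ->
  forall b, T (pbw m (f m) * b) = 0.
Proof.
move=> s_uniq m_s sum_rad b; elim: (pbw_spanT b) => [|m' q|b1 b2 _ IH1 _ IH2].
- by rewrite mulr0 T0.
- have [mm'|] := eqVneq (m + m') 0; last exact: T_pbw_mul.
  have := sum_rad (pbw m' q); rewrite mulr_suml T_sum (bigD1_seq m) //= big1_seq ?addr0 //.
  move=> j /andP [j_neq_m _]; apply: T_pbw_mul; apply: contra j_neq_m => /eqP jm'.
  by apply/eqP; lia.
- by rewrite mulrDr TD IH1 IH2 addr0.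
Qed.

Lemma expr_mul_expr_ev x y w q : weight y w -> x * y = ev q -> q != 0 ->
  forall k, exists2 Q, Q != 0 & x ^+ k * y ^+ k = ev Q.
Proof.
move=> y_w xy q_neq0; elim=> [|k [Q Q_neq0 eQ]].
  by exists 1; rewrite ?oner_neq0 // !expr0 mulr1 rmorph1.
exists (Q * shift_poly (k%:R * w) q); first by rewrite mulf_neq0 // shift_poly_eq0.
rewrite exprSr exprS mulrA -(mulrA (x ^+ k)) xy -mulrA.
by rewrite (ev_mul_weight _ (weight_expr k y_w)) mulrA eQ -rmorphM.
Qed.

Lemma uv_pow_mulN m : P != 0 -> exists2 Q, Q != 0 & uv_pow m * uv_pow (- m) = ev Q.
Proof.
move=> P_neq0; have Pm_neq0 c : shift_poly c P != 0 by rewrite shift_poly_eq0.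
case: m => [[|k]|k].
- by exists 1; rewrite ?oner_neq0 // /= expr0 mulr1 rmorph1.
- exact: expr_mul_expr_ev weight_v uv_ev (Pm_neq0 _) k.+1.
- exact: expr_mul_expr_ev weight_u vu_ev (Pm_neq0 _) k.+1.
Qed.

Lemma in_IT_of_pbw_component m g : P != 0 -> g != 0 ->
  (forall b, T (pbw m g * b) = 0) -> exists2 S, S != 0 & in_IT z T S.
Proof.
move=> P_neq0 g_neq0 g_rad; have [Q Q_neq0 eQ] := uv_pow_mulN m P_neq0.
exists (Q * shift_poly (- m)%:~R g); first by rewrite mulf_neq0 // shift_poly_eq0.
move=> b; rewrite rmorphM /= -eQ -(mulrA (uv_pow m)).
rewrite -(ev_mul_weight _ (weight_uv_pow (- m))).
by have := g_rad (uv_pow (- m) * b); rewrite /pbw !mulrA.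
Qed.

Lemma lmul_stieltjes_Negz S n : lmul_poly S F (Negz n) = T (ev S * z ^+ n).
Proof.
rewrite horner_alg_coef mulr_suml T_sum; apply: eq_bigr => i _.
rewrite -scalerAl -exprD TZ (_ : Negz n - i%:Z = Negz (i + n)) //.
by rewrite !NegzE; lia.
Qed.

Lemma in_IT_lmul_poly S : in_IT z T S <-> laurent_is_poly (lmul_poly S F).
Proof.
split=> [S_IT n|S_poly b]; first by rewrite lmul_stieltjes_Negz.
elim: (pbw_spanT b) => [|m p|b1 b2 _ IH1 _ IH2]; first by rewrite mulr0 T0.
- have [->|m_neq0] := eqVneq m 0.
    rewrite /pbw /= expr0 mul1r [ev p]horner_alg_coef mulr_sumr T_sum big1 // => i _.
    by rewrite -scalerAr TZ -lmul_stieltjes_Negz S_poly mulr0.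
  apply: T_weight_int m_neq0; rewrite -[m%:~R]add0r.
  exact: weightM (weight_ev S) (weight_pbw m p).
- by rewrite mulrDr TD IH1 IH2 addr0.
Qed.

Lemma in_IT_mulr S Q : in_IT z T S -> in_IT z T (S * Q).
Proof. by move=> S_IT b; rewrite rmorphM -mulrA; apply: S_IT. Qed.

Lemma in_IT_modp S Q : in_IT z T S -> in_IT z T Q -> in_IT z T (Q %% S).
Proof.
move=> S_IT Q_IT b; have -> : Q %% S = Q - Q %/ S * S.
  by rewrite {2}(divp_eq Q S) addrC addKr.
by rewrite rmorphB mulrBl TD TN Q_IT (mulrC (Q %/ S)) in_IT_mulr // subrr.
Qed.

Lemma lmul_stieltjes_polyE S : in_IT z T S ->
  lmul_poly S F = laurent_of_poly (\poly_(i < size S) lmul_poly S F i).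
Proof. by move/in_IT_lmul_poly; apply: lmul_poly_polyE. Qed.

Lemma degenerate_rational : P != 0 -> degenerate T -> is_rational_expansion F.
Proof.
move=> P_neq0 [a [a_neq0 a_rad]].
suff [S S_neq0 /lmul_stieltjes_polyE eS] : exists2 S, S != 0 & in_IT z T S.
  by exists (\poly_(i < size S) lmul_poly S F i), S.
have [s [f [s_uniq ea]]] := pbw_decomposition a.
have [/allP f_eq0|/allPn [m m_s fm_neq0]] := boolP (all (fun m => f m == 0) s).
  move: a_neq0; rewrite ea big1_seq ?eqxx // => m /andP [_ /f_eq0 /eqP ->].
  exact: pbw0.
apply: in_IT_of_pbw_component P_neq0 fm_neq0 _.
by apply: T_mul_pbw_component s_uniq m_s _ => b; rewrite -ea.
Qed.

Lemma rational_degenerate : is_rational_expansion F -> degenerate T.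
Proof.
case=> Rp [S [S_neq0 eS]]; exists (ev S); split.
  by rewrite -(rmorph0 ev) (inj_eq (is_AP_horner_inj AP)).
by apply/in_IT_lmul_poly; rewrite eS.
Qed.

Lemma in_IT_dvdp Rp S : coprimep Rp S -> lmul_poly S F = laurent_of_poly Rp ->
  forall Q, in_IT z T Q <-> (S %| Q).
Proof.
move=> RpS_coprime eS Q; have S_IT : in_IT z T S by apply/in_IT_lmul_poly; rewrite eS.
split=> [Q_IT|/dvdpP [Q' ->]]; last by rewrite mulrC; apply: in_IT_mulr.
have cross := lmul_poly_cross eS (lmul_stieltjes_polyE (in_IT_modp S_IT Q_IT)).
rewrite (dvdp_mod Q (dvdpp S)) -(Gauss_dvdpl _ (q := Rp)) 1?coprimep_sym //.
by rewrite cross dvdp_mulIl.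
Qed.

End TwistedTrace.

Theorem theorem3p2 (R : realType) (P : {poly R[i]}) (t : R[i])
  (A : algType R[i]) (u v z : A) (g : A -> A) (T : A -> R[i]) :
  P \is monic -> (1 < size P)%N -> t != 0 ->
  is_AP P u v z ->
  alg_morph g -> g u = t^-1 *: u -> g v = t *: v -> g z = z ->
  twisted_trace g T ->
  (forall S : {poly R[i]},
      in_IT z T S <-> laurent_is_poly (lmul_poly S (stieltjes z T))) /\
  (degenerate T <-> is_rational_expansion (stieltjes z T)) /\
  (forall Rp S : {poly R[i]}, S \is monic -> coprimep Rp S ->
      lmul_poly S (stieltjes z T) = laurent_of_poly Rp ->
      forall Q : {poly R[i]}, in_IT z T Q <-> (S %| Q)%R).
Proof.
(* Of the hypotheses on [g] only [g z = z] matters: it makes [T] commute with [z].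
   Monicity of [P] is only used through [P != 0]. *)
move=> P_monic _ _ AP _ _ _ gz [T_linear T_twist].
have P_neq0 := monic_neq0 P_monic.
have T_mulz a : T (a * z) = T (z * a) by rewrite T_twist gz.
split; first exact: in_IT_lmul_poly AP T_linear T_mulz.
split; first split.
- exact: degenerate_rational AP T_linear T_mulz P_neq0.
- exact: rational_degenerate AP T_linear T_mulz.
by move=> Rp S _; apply: in_IT_dvdp AP T_linear T_mulz Rp S.
Qed.
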